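(* Let $A\in\mathbb{C}^{m\times n}$ have rank $r$, $B\in\mathbb{C}^{m\times n}$ have rank $s$, and $E=B-A$. Then $$\|B^{\dagger}-A^{\dagger}\|_{F}^{2}\leq\min\big\{\gamma_{1}+\|B^{\dagger}EA^{\dagger}\|_{F}^{2},\ \gamma_{2}+\|A^{\dagger}EB^{\dagger}\|_{F}^{2}\big\},$$ where $$\gamma_{1}:=\|A^{\dagger}\|_{2}^{2}\Big(\|A^{\dagger}E\|_{F}^{2}-\frac{\|A^{\dagger}EB^{\dagger}\|_{F}^{2}}{\|B^{\dagger}\|_{2}^{2}}\Big)+\|B^{\dagger}\|_{2}^{2}\Big(\|EB^{\dagger}\|_{F}^{2}-\frac{\|A^{\dagger}EB^{\dagger}\|_{F}^{2}}{\|A^{\dagger}\|_{2}^{2}}\Big),$$ $$\gamma_{2}:=\|A^{\dagger}\|_{2}^{2}\Big(\|EA^{\dagger}\|_{F}^{2}-\frac{\|B^{\dagger}EA^{\dagger}\|_{F}^{2}}{\|B^{\dagger}\|_{2}^{2}}\Big)+\|B^{\dagger}\|_{2}^{2}\Big(\|B^{\dagger}E\|_{F}^{2}-\frac{\|B^{\dagger}EA^{\dagger}\|_{F}^{2}}{\|A^{\dagger}\|_{2}^{2}}\Big).$$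
   Context: $M^{\dagger}$ denotes the Moore–Penrose inverse of $M$, $\|\cdot\|_{2}$ the spectral norm and $\|\cdot\|_{F}$ the Frobenius norm. *)

From HB Require Import structures.
From mathcomp Require Import all_boot all_order all_algebra.
From mathcomp Require Import complex.
From mathcomp Require Import boolp classical_sets reals.
Set Implicit Arguments. Unset Strict Implicit. Unset Printing Implicit Defensive.
Import Order.TTheory GRing.Theory Num.Theory.
Local Open Scope ring_scope.
Local Open Scope classical_set_scope.

Section Defs.
Variable R : realType.
Local Notation C := R[i].

Definition ctrmx (m n : nat) (M : 'M[C]_(m, n)) : 'M[C]_(n, m) :=
  (map_mx Num.conj M)^T.

Definition is_MP_inverse (m n : nat) (A : 'M[C]_(m, n)) (X : 'M[C]_(n, m)) : Prop :=
  [/\ A *m X *m A = A, X *m A *m X = X,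
      ctrmx (A *m X) = A *m X & ctrmx (X *m A) = X *m A].

(* Moore-Penrose inverse A^dagger (it exists and is unique; xget picks it) *)
Definition pinv (m n : nat) (A : 'M[C]_(m, n)) : 'M[C]_(n, m) :=
  xget 0 (is_MP_inverse A).

Definition frobnorm (m n : nat) (M : 'M[C]_(m, n)) : R :=
  Num.sqrt (\sum_(i < m) \sum_(j < n) (ComplexField.Normc.normc (M i j)) ^+ 2).

Definition vnorm (n : nat) (x : 'cV[C]_n) : R :=
  Num.sqrt (\sum_(i < n) (ComplexField.Normc.normc (x i 0)) ^+ 2).

Definition specnorm (m n : nat) (M : 'M[C]_(m, n)) : R :=
  sup [set vnorm (M *m x) | x in [set x : 'cV[C]_n | vnorm x <= 1]].

End Defs.

(* Write E = B - A, Q = A A^+ and P = B^+ B.  Then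
     B^+ - A^+ = - B^+ E A^+ + B^+ (I - Q) - (I - P) A^+
   and the three terms are pairwise orthogonal for the Frobenius inner
   product, so their squared norms add up.  Since (I - Q) A = 0 and
   B^+ = B^+ (B B^+)^*, we get B^+ (I - Q) = B^+ ((I - Q) E B^+)^*, whose
   squared norm is at most |B^+|_2^2 (|E B^+|_F^2 - |Q E B^+|_F^2) because Q
   is an orthogonal projector; and A^+ E B^+ = A^+ (Q E B^+) bounds
   |Q E B^+|_F^2 from below by |A^+ E B^+|_F^2 / |A^+|_2^2.  The term
   (I - P) A^+ is the conjugate transpose of the same situation for the pairs
   (B^*, B^+^* ) and (A^*, A^+^* ).  Exchanging A and B gives the second
   bound of the minimum. *)

From HB Require Import structures.
From mathcomp Require Import all_boot all_order all_algebra.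
From mathcomp Require Import complex.
From mathcomp Require Import boolp classical_sets reals.
From mathcomp Require Import ring lra.
Set Implicit Arguments. Unset Strict Implicit. Unset Printing Implicit Defensive.
Import Order.TTheory GRing.Theory Num.Theory.
Local Open Scope ring_scope.

(* [a = 0] is allowed: then [y / a = 0]. *)
Lemma ler_wdivrMl (F : realFieldType) (a x y : F) :
  0 <= a -> 0 <= x -> y <= a * x -> y / a <= x.
Proof.
move=> a_ge0 x_ge0; have [->|a_neq0] := eqVneq a 0; first by rewrite invr0 mulr0.
by rewrite ler_pdivrMr ?lt_def ?a_neq0 // mulrC.
Qed.

Section ConjugateTranspose.
Variable R : realType.
Local Notation C := R[i].

Lemma ctrmxE m n (M : 'M[C]_(m, n)) i j : ctrmx M i j = Num.conj (M j i).
Proof. by rewrite !mxE. Qed.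

Lemma ctrmxK m n (M : 'M[C]_(m, n)) : ctrmx (ctrmx M) = M.
Proof. by apply/matrixP => i j; rewrite !ctrmxE conjCK. Qed.

Lemma ctrmx_mul m n p (M : 'M[C]_(m, n)) (N : 'M[C]_(n, p)) :
  ctrmx (M *m N) = ctrmx N *m ctrmx M.
Proof. by rewrite /ctrmx map_mxM trmx_mul. Qed.

Lemma ctrmxD m n (M N : 'M[C]_(m, n)) : ctrmx (M + N) = ctrmx M + ctrmx N.
Proof. by rewrite /ctrmx map_mxD linearD. Qed.

Lemma ctrmxN m n (M : 'M[C]_(m, n)) : ctrmx (- M) = - ctrmx M.
Proof. by rewrite /ctrmx map_mxN linearN. Qed.

Lemma ctrmxB m n (M N : 'M[C]_(m, n)) : ctrmx (M - N) = ctrmx M - ctrmx N.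
Proof. by rewrite ctrmxD ctrmxN. Qed.

Lemma ctrmx0 m n : ctrmx (0 : 'M[C]_(m, n)) = 0.
Proof. by rewrite /ctrmx map_mx0 trmx0. Qed.

Lemma ctrmx1 n : ctrmx (1%:M : 'M[C]_n) = 1%:M.
Proof. by rewrite /ctrmx map_mx1 trmx1. Qed.

Lemma ctrmxZ m n (c : C) (M : 'M[C]_(m, n)) :
  ctrmx (c *: M) = Num.conj c *: ctrmx M.
Proof. by rewrite /ctrmx map_mxZ linearZ. Qed.

Lemma ctrmxV n (M : 'M[C]_n) : ctrmx (invmx M) = invmx (ctrmx M).
Proof. by rewrite /ctrmx map_invmx trmx_inv. Qed.

Lemma conj_real_complex (r : R) : Num.conj ((r%:C)%C : C) = (r%:C)%C.
Proof. exact: conjc_real. Qed.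

Lemma mxtrace_ctrmx n (M : 'M[C]_n) : \tr (ctrmx M) = Num.conj (\tr M).
Proof. by rewrite rmorph_sum; apply: eq_bigr => i _; rewrite ctrmxE. Qed.

End ConjugateTranspose.

Section Frobenius.
Variable R : realType.
Local Notation C := R[i].
Import ComplexField.Normc.

Lemma normc_ge0 (z : C) : 0 <= normc z.
Proof. by case: z => a b; exact: sqrtr_ge0. Qed.

Lemma frobnorm_ge0 m n (M : 'M[C]_(m, n)) : 0 <= frobnorm M.
Proof. exact: sqrtr_ge0. Qed.

Lemma frobnorm2_sum m n (M : 'M[C]_(m, n)) :
  frobnorm M ^+ 2 = \sum_i \sum_j normc (M i j) ^+ 2.
Proof.
by rewrite sqr_sqrtr // sumr_ge0 // => i _; rewrite sumr_ge0 // => j _; rewrite sqr_ge0.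
Qed.

Lemma frobnorm2_tr m n (M : 'M[C]_(m, n)) :
  ((frobnorm M ^+ 2)%:C)%C = \tr (M *m ctrmx M).
Proof.
rewrite frobnorm2_sum rmorph_sum; apply: eq_bigr => i _; rewrite mxE rmorph_sum.
by apply: eq_bigr => j _; rewrite ctrmxE rmorphXn; exact: sqr_normc.
Qed.

Lemma frobnorm_eq0 m n (M : 'M[C]_(m, n)) : (frobnorm M == 0) = (M == 0).
Proof.
rewrite -sqrf_eq0 frobnorm2_sum; apply/idP/eqP => [|->]; last first.
  by rewrite big1 // => i _; rewrite big1 // => j _; rewrite mxE normc0 expr0n.
rewrite psumr_eq0 => [/allP M0|i _]; last by rewrite sumr_ge0 // => j _; rewrite sqr_ge0.
apply/matrixP => i j; move: (M0 i (mem_index_enum i)).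
rewrite psumr_eq0 => [/allP /(_ j (mem_index_enum j))|k _]; last exact: sqr_ge0.
by rewrite sqrf_eq0 mxE => /eqP /eq0_normc.
Qed.

Lemma frobnorm0 m n : frobnorm (0 : 'M[C]_(m, n)) = 0.
Proof. by apply/eqP; rewrite frobnorm_eq0. Qed.

Lemma frobnorm_ctrmx m n (M : 'M[C]_(m, n)) : frobnorm (ctrmx M) = frobnorm M.
Proof.
apply/eqP; rewrite -(eqrXn2 (ltn0Sn 1)) ?frobnorm_ge0 //; apply/eqP/(@complexI R).
by rewrite !frobnorm2_tr ctrmxK mxtrace_mulC.
Qed.

Lemma frobnormN m n (M : 'M[C]_(m, n)) : frobnorm (- M) = frobnorm M.
Proof.
by congr Num.sqrt; apply: eq_bigr => i _; apply: eq_bigr => j _;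
  rewrite mxE normcN.
Qed.

Lemma frobnormZ m n (c : R) (M : 'M[C]_(m, n)) :
  frobnorm ((c%:C)%C *: M) = `|c| * frobnorm M.
Proof.
rewrite /frobnorm -[`|c|]normr_id -sqrtr_sqr -sqrtrM ?sqr_ge0 // mulr_sumr.
congr Num.sqrt; apply: eq_bigr => i _; rewrite mulr_sumr.
apply: eq_bigr => j _; rewrite mxE normcM exprMn.
by congr (_ * _); rewrite /= expr0n addr0 sqrtr_sqr real_normK ?num_real.
Qed.

Lemma frobnorm2_col m n (M : 'M[C]_(m, n)) :
  frobnorm M ^+ 2 = \sum_j frobnorm (col j M) ^+ 2.
Proof.
rewrite frobnorm2_sum exchange_big; apply: eq_bigr => j _.
by rewrite frobnorm2_sum; apply: eq_bigr => i _; rewrite big_ord1 mxE.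
Qed.

Lemma vnorm_frobnorm n (x : 'cV[C]_n) : vnorm x = frobnorm x.
Proof. by congr Num.sqrt; apply: eq_bigr => i _; rewrite big_ord1. Qed.

Lemma frobnorm2D_tr m n (X Y : 'M[C]_(m, n)) :
  ((frobnorm (X + Y) ^+ 2)%:C)%C = ((frobnorm X ^+ 2)%:C)%C + ((frobnorm Y ^+ 2)%:C)%C
                                  + (\tr (X *m ctrmx Y) + \tr (Y *m ctrmx X)).
Proof.
rewrite !frobnorm2_tr ctrmxD mulmxDl !mulmxDr !mxtraceD.
by move: (\tr (X *m _)) (\tr (Y *m _)) => a b; ring.
Qed.

Lemma frobnorm2D_rorth m n (X Y : 'M[C]_(m, n)) : X *m ctrmx Y = 0 ->
  frobnorm (X + Y) ^+ 2 = frobnorm X ^+ 2 + frobnorm Y ^+ 2.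
Proof.
move=> XY0; have YX0 : Y *m ctrmx X = 0 by rewrite -[Y]ctrmxK -ctrmx_mul XY0 ctrmx0.
apply: (@complexI R); rewrite rmorphD /= frobnorm2D_tr XY0 YX0 mxtrace0.
by rewrite !addr0.
Qed.

Lemma frobnorm2D_corth m n (X Y : 'M[C]_(m, n)) : ctrmx Y *m X = 0 ->
  frobnorm (X + Y) ^+ 2 = frobnorm X ^+ 2 + frobnorm Y ^+ 2.
Proof.
move=> YX0; rewrite -frobnorm_ctrmx ctrmxD frobnorm2D_rorth ?frobnorm_ctrmx //.
by rewrite ctrmxK -[_ *m Y]ctrmxK ctrmx_mul ctrmxK YX0 ctrmx0.
Qed.

Lemma frobnorm2B_real m n (X Y : 'M[C]_(m, n)) (r : R) :
  \tr (X *m ctrmx Y) = (r%:C)%C ->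
  frobnorm (X - Y) ^+ 2 = frobnorm X ^+ 2 + frobnorm Y ^+ 2 - r *+ 2.
Proof.
move=> XYr; have YXr : \tr (Y *m ctrmx X) = (r%:C)%C.
  by rewrite -[Y]ctrmxK -ctrmx_mul mxtrace_ctrmx XYr conj_real_complex.
apply: (@complexI R); rewrite frobnorm2D_tr frobnormN ctrmxN mulmxN mulNmx.
rewrite !linearN /= XYr YXr rmorphB rmorphD rmorphMn /=.
by rewrite -opprD -mulr2n.
Qed.

End Frobenius.

Section SpectralNorm.
Variable R : realType.
Local Notation C := R[i].
Import ComplexField.Normc.
Local Open Scope classical_set_scope.
Local Notation specset M := [set vnorm (M *m x) | x in [set x | vnorm x <= 1]].

Lemma specnorm_ubound m n (M : 'M[C]_(m, n)) : has_ubound (specset M).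
Proof.
exists (Num.sqrt (\sum_i (\sum_j normc (M i j)) ^+ 2)) => _ [x /= x1 <-].
have xj1 j : normc (x j 0) <= 1.
  apply: le_trans x1; rewrite vnorm_frobnorm -ler_sqr ?nnegrE ?normc_ge0 ?frobnorm_ge0 //.
  rewrite frobnorm2_sum (bigD1 j) //= big_ord1 lerDl.
  by apply: sumr_ge0 => i _; rewrite big_ord1 sqr_ge0.
have Mx_le i : normc ((M *m x) i 0) <= \sum_j normc (M i j).
  rewrite mxE; apply: (big_ind2 (fun z r => normc z <= r)) => [|z1 r1 z2 r2 h1 h2|j _].
  - by rewrite normc0.
  - exact: le_trans (le_normcD _ _) (lerD h1 h2).
  - by rewrite normcM ler_piMr ?normc_ge0.
apply: ler_wsqrtr; apply: ler_sum => i _.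
by rewrite !expr2 ler_pM ?normc_ge0.
Qed.

Lemma specnorm_ge0 m n (M : 'M[C]_(m, n)) : 0 <= specnorm M.
Proof.
apply: ub_le_sup; first exact: specnorm_ubound.
by exists 0; rewrite /= ?mulmx0 vnorm_frobnorm frobnorm0.
Qed.

Lemma frobnorm_mulcV_le m n (M : 'M[C]_(m, n)) (x : 'cV[C]_n) :
  frobnorm (M *m x) <= specnorm M * frobnorm x.
Proof.
have [->|x0] := eqVneq x 0; first by rewrite mulmx0 !frobnorm0 mulr0.
have x_gt0 : 0 < frobnorm x by rewrite lt_def frobnorm_eq0 x0 frobnorm_ge0.
pose s : R := (frobnorm x)^-1; have s_ge0 : 0 <= s by rewrite invr_ge0 ltW.
have : s * frobnorm (M *m x) <= specnorm M.
  apply: ub_le_sup; first exact: specnorm_ubound.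
  exists (s%:C%C *: x); rewrite /= !vnorm_frobnorm.
    by rewrite frobnormZ ger0_norm // mulVf ?gt_eqF.
  by rewrite -scalemxAr frobnormZ ger0_norm.
by rewrite mulrC -ler_pdivrMr.
Qed.

Lemma specnorm_le m n (M : 'M[C]_(m, n)) (c : R) : 0 <= c ->
  (forall x : 'cV[C]_n, frobnorm (M *m x) <= c * frobnorm x) -> specnorm M <= c.
Proof.
move=> c0 Mc; apply: ge_sup => [|_ [x /= x1 <-]].
  by exists (vnorm (M *m 0)), 0; rewrite //= vnorm_frobnorm frobnorm0.
rewrite vnorm_frobnorm in x1; rewrite vnorm_frobnorm.
exact: le_trans (Mc x) (ler_piMr c0 x1).
Qed.

Lemma frobnorm2_mull p q k (X : 'M[C]_(p, q)) (Y : 'M[C]_(q, k)) :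
  frobnorm (X *m Y) ^+ 2 <= specnorm X ^+ 2 * frobnorm Y ^+ 2.
Proof.
rewrite !frobnorm2_col mulr_sumr; apply: ler_sum => j _.
rewrite colE -mulmxA -colE -exprMn; apply: lerXn2r; last exact: frobnorm_mulcV_le.
  exact: frobnorm_ge0.
by rewrite nnegrE mulr_ge0 ?specnorm_ge0 ?frobnorm_ge0.
Qed.

Lemma frobnorm_ctrmx_mulcV_le p q (X : 'M[C]_(p, q)) (v : 'cV[C]_p) :
  frobnorm (ctrmx X *m v) <= specnorm X * frobnorm v.
Proof.
(* [|w|^2 = tr (X w v^* )] with [w = X^* v]; expanding
   [0 <= |X w - s^2 v|^2] and using [|X w| <= s |w|] gives [|w| <= s |v|]. *)
set w := ctrmx X *m v; set s := specnorm X; have s_ge0 : 0 <= s := specnorm_ge0 X.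
have trXwv : \tr (X *m w *m ctrmx v) = ((frobnorm w ^+ 2)%:C)%C.
  by rewrite frobnorm2_tr ctrmx_mul ctrmxK -mulmxA mxtrace_mulC !mulmxA.
have [s0|s_neq0] := eqVneq s 0.
  have : X *m w = 0.
    apply/eqP; rewrite -frobnorm_eq0 eq_le frobnorm_ge0 andbT.
    by rewrite -(mul0r (frobnorm w)) -s0 frobnorm_mulcV_le.
  move: trXwv => /[swap] ->; rewrite mul0mx mxtrace0 => /esym/(@complexI R)/eqP.
  by rewrite s0 mul0r sqrf_eq0 => /eqP ->.
have s2_gt0 : 0 < s ^+ 2 by rewrite exprn_gt0 // lt_def s_neq0.
have : \tr (X *m w *m ctrmx ((s ^+ 2)%:C%C *: v)) = ((s ^+ 2 * frobnorm w ^+ 2)%:C)%C.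
  by rewrite ctrmxZ conj_real_complex -scalemxAr mxtraceZ trXwv [RHS]rmorphM.
move=> /frobnorm2B_real expand; have := sqr_ge0 (frobnorm (X *m w - (s ^+ 2)%:C%C *: v)).
rewrite expand frobnormZ ger0_norm ?sqr_ge0 // => sum_ge0.
have := frobnorm2_mull X w; rewrite -/s => Xw_le.
have : s ^+ 2 * frobnorm w ^+ 2 <= s ^+ 2 * (s ^+ 2 * frobnorm v ^+ 2) by nra.
by rewrite ler_pM2l // -exprMn ler_sqr ?nnegrE ?mulr_ge0 ?frobnorm_ge0.
Qed.

Lemma specnorm_ctrmx m n (M : 'M[C]_(m, n)) : specnorm (ctrmx M) = specnorm M.
Proof.
have le p q (N : 'M[C]_(p, q)) : specnorm (ctrmx N) <= specnorm N.
  exact: specnorm_le (specnorm_ge0 N) (frobnorm_ctrmx_mulcV_le N).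
by apply/le_anti; rewrite le -{1}[M]ctrmxK le.
Qed.

End SpectralNorm.

Section MoorePenrose.
Variable R : realType.
Local Notation C := R[i].

Lemma is_MP_inverse_ctrmx m n (A : 'M[C]_(m, n)) X :
  is_MP_inverse A X -> is_MP_inverse (ctrmx A) (ctrmx X).
Proof.
case=> AXA XAX AXh XAh; split; rewrite -?ctrmx_mul ?ctrmxK.
- by rewrite mulmxA AXA.
- by rewrite mulmxA XAX.
- by rewrite XAh.
- by rewrite AXh.
Qed.

Lemma mulmx_ctrmx_unit r n (N : 'M[C]_(r, n)) : row_free N -> N *m ctrmx N \in unitmx.
Proof.
move=> freeN; rewrite -row_free_unit; apply: inj_row_free => u uNN0.
have : frobnorm (u *m N) ^+ 2 = 0.
  apply: (@complexI R); rewrite frobnorm2_tr ctrmx_mul mulmxA -(mulmxA u) uNN0.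
  by rewrite mul0mx mxtrace0.
by move/eqP; rewrite sqrf_eq0 frobnorm_eq0 mulmx_free_eq0 // => /eqP.
Qed.

Lemma is_MP_inverse_full_rank_factor m r n (F : 'M[C]_(m, r)) (G : 'M[C]_(r, n)) :
  row_free (ctrmx F) -> row_free G ->
  is_MP_inverse (F *m G)
    (ctrmx G *m invmx (G *m ctrmx G) *m invmx (ctrmx F *m F) *m ctrmx F).
Proof.
move=> freeF freeG; have := mulmx_ctrmx_unit freeF; rewrite ctrmxK => unitF.
have unitG := mulmx_ctrmx_unit freeG.
set K := invmx (G *m ctrmx G); set L := invmx (ctrmx F *m F).
have Kh : ctrmx K = K by rewrite ctrmxV ctrmx_mul ctrmxK.
have Lh : ctrmx L = L by rewrite ctrmxV ctrmx_mul ctrmxK.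
have GK : G *m ctrmx G *m K = 1%:M := mulmxV unitG.
have LF : L *m (ctrmx F *m F) = 1%:M := mulVmx unitF.
have AX : F *m G *m (ctrmx G *m K *m L *m ctrmx F) = F *m L *m ctrmx F.
  by rewrite !mulmxA -(mulmxA F) -(mulmxA F) GK mulmx1.
have XA : ctrmx G *m K *m L *m ctrmx F *m (F *m G) = ctrmx G *m K *m G.
  by rewrite -!mulmxA (mulmxA (ctrmx F)) (mulmxA L) LF mul1mx.
split.
- by rewrite AX -!mulmxA (mulmxA (ctrmx F)) (mulmxA L) LF mul1mx.
- by rewrite XA -!mulmxA (mulmxA G) (mulmxA (G *m _)) GK mul1mx !mulmxA.
- by rewrite AX !ctrmx_mul ctrmxK Lh mulmxA.
- by rewrite XA !ctrmx_mul ctrmxK Kh mulmxA.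
Qed.

Lemma is_MP_inverse_exists m n (A : 'M[C]_(m, n)) : exists X, is_MP_inverse A X.
Proof.
rewrite -(mulmx_base A); eexists; apply: is_MP_inverse_full_rank_factor.
  by rewrite /row_free /ctrmx mxrank_tr mxrank_map; exact: col_base_full.
exact: row_base_free.
Qed.

Lemma pinvP m n (A : 'M[C]_(m, n)) : is_MP_inverse A (pinv A).
Proof. exact: (xgetPex 0 (is_MP_inverse_exists A)). Qed.

End MoorePenrose.

Section PinvPerturbation.
Variable R : realType.
Local Notation C := R[i].

Section MPIdentities.
Variables (m n : nat) (A : 'M[C]_(m, n)) (X : 'M[C]_(n, m)).
Hypothesis AX : is_MP_inverse A X.

Lemma MP_mul_projC : X *m (1%:M - A *m X) = 0.
Proof. by case: AX => _ XAX _ _; rewrite mulmxBr mulmx1 mulmxA XAX subrr. Qed.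

Lemma MP_projC_mul : (1%:M - A *m X) *m A = 0.
Proof. by case: AX => AXA _ _ _; rewrite mulmxBl mul1mx AXA subrr. Qed.

Lemma MP_coprojC_mul : (1%:M - X *m A) *m X = 0.
Proof. by case: AX => _ XAX _ _; rewrite mulmxBl mul1mx XAX subrr. Qed.

Lemma MP_projC_herm : ctrmx (1%:M - A *m X) = 1%:M - A *m X.
Proof. by case: AX => _ _ AXh _; rewrite ctrmxB ctrmx1 AXh. Qed.

Lemma MP_coprojC_herm : ctrmx (1%:M - X *m A) = 1%:M - X *m A.
Proof. by case: AX => _ _ _ XAh; rewrite ctrmxB ctrmx1 XAh. Qed.

End MPIdentities.

Lemma frobnorm2_orth_proj m n (P : 'M[C]_m) (Y : 'M[C]_(m, n)) :
  ctrmx P = P -> P *m P = P ->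
  frobnorm Y ^+ 2 = frobnorm (P *m Y) ^+ 2 + frobnorm ((1%:M - P) *m Y) ^+ 2.
Proof.
move=> Ph PP; rewrite -frobnorm2D_corth; first by rewrite -mulmxDl addrC subrK mul1mx.
rewrite ctrmx_mul ctrmxB ctrmx1 Ph -mulmxA (mulmxA (1%:M - P)) mulmxBl mul1mx PP.
by rewrite subrr mul0mx mulmx0.
Qed.

Lemma pinvB_decomposition m n (A B : 'M[C]_(m, n)) (Ad Bd : 'M[C]_(n, m)) :
  Bd - Ad = - (Bd *m (B - A) *m Ad) + Bd *m (1%:M - A *m Ad) - (1%:M - Bd *m B) *m Ad.
Proof.
rewrite mulmxBr mulmxBl !opprB (mulmxBr Bd) mulmx1 mulmxA (mulmxBl _ _ Ad) mul1mx.
by rewrite opprB (addrC (Bd *m A *m Ad - _)) !subrKA.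
Qed.

Section PinvPair.
Variables (m n : nat) (A B : 'M[C]_(m, n)) (Ad Bd : 'M[C]_(n, m)).
Hypotheses (hA : is_MP_inverse A Ad) (hB : is_MP_inverse B Bd).
Local Notation E := (B - A).

Lemma frobnorm2_pinvB_split :
  frobnorm (Bd - Ad) ^+ 2 = frobnorm (Bd *m E *m Ad) ^+ 2
    + frobnorm (Bd *m (1%:M - A *m Ad)) ^+ 2 + frobnorm ((1%:M - Bd *m B) *m Ad) ^+ 2.
Proof.
rewrite (pinvB_decomposition A B) frobnorm2D_corth; last first.
  rewrite ctrmxN ctrmx_mul MP_coprojC_herm // mulmxDr mulmxN !mulNmx -!mulmxA.
  by rewrite !(mulmxA (1%:M - Bd *m B) Bd) MP_coprojC_mul // !mul0mx !mulmx0 !oppr0 addr0.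
rewrite frobnorm2D_rorth ?frobnormN //.
rewrite ctrmx_mul MP_projC_herm // mulNmx -!mulmxA (mulmxA Ad) MP_mul_projC //.
by rewrite mul0mx !mulmx0 oppr0.
Qed.

Lemma frobnorm2_pinv_projC_le :
  frobnorm (Bd *m (1%:M - A *m Ad)) ^+ 2 <=
  specnorm Bd ^+ 2 * (frobnorm (E *m Bd) ^+ 2
                      - frobnorm (Ad *m E *m Bd) ^+ 2 / specnorm Ad ^+ 2).
Proof.
have [AAdA AdAAd AAdh _] := hA; have [_ BdBBd BBdh _] := hB.
have -> : Bd *m (1%:M - A *m Ad) = Bd *m ctrmx ((1%:M - A *m Ad) *m E *m Bd).
  rewrite (mulmxBr (1%:M - A *m Ad)) MP_projC_mul // subr0 -mulmxA ctrmx_mul BBdh.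
  by rewrite MP_projC_herm // !mulmxA BdBBd.
have QQ : A *m Ad *m (A *m Ad) = A *m Ad by rewrite mulmxA AAdA.
rewrite (frobnorm2_orth_proj (E *m Bd) AAdh QQ) !mulmxA.
apply: le_trans (frobnorm2_mull _ _) _; rewrite frobnorm_ctrmx ler_wpM2l ?sqr_ge0 //.
rewrite addrAC lerDr subr_ge0 ler_wdivrMl ?sqr_ge0 //.
have -> : Ad *m E *m Bd = Ad *m (A *m Ad *m E *m Bd) by rewrite !mulmxA AdAAd.
exact: frobnorm2_mull.
Qed.

End PinvPair.

Lemma frobnorm2_pinv_coprojC_le m n (A B : 'M[C]_(m, n)) (Ad Bd : 'M[C]_(n, m)) :
  is_MP_inverse A Ad -> is_MP_inverse B Bd ->
  frobnorm ((1%:M - Bd *m B) *m Ad) ^+ 2 <=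
  specnorm Ad ^+ 2 * (frobnorm (Ad *m (B - A)) ^+ 2
                      - frobnorm (Ad *m (B - A) *m Bd) ^+ 2 / specnorm Bd ^+ 2).
Proof.
move=> /is_MP_inverse_ctrmx hA /is_MP_inverse_ctrmx hB.
have := frobnorm2_pinv_projC_le hB hA; rewrite !specnorm_ctrmx.
rewrite -ctrmxB -!ctrmx_mul -ctrmx1 -ctrmxB -ctrmx_mul !frobnorm_ctrmx ctrmx1.
by rewrite mulmxA -[A - B]opprB mulmxN mulNmx !frobnormN.
Qed.

Lemma frobnorm2_pinvB_le m n (A B : 'M[C]_(m, n)) (Ad Bd : 'M[C]_(n, m)) :
  is_MP_inverse A Ad -> is_MP_inverse B Bd ->
  frobnorm (Bd - Ad) ^+ 2 <=
    specnorm Ad ^+ 2 * (frobnorm (Ad *m (B - A)) ^+ 2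
                        - frobnorm (Ad *m (B - A) *m Bd) ^+ 2 / specnorm Bd ^+ 2)
  + specnorm Bd ^+ 2 * (frobnorm ((B - A) *m Bd) ^+ 2
                        - frobnorm (Ad *m (B - A) *m Bd) ^+ 2 / specnorm Ad ^+ 2)
  + frobnorm (Bd *m (B - A) *m Ad) ^+ 2.
Proof.
move=> hA hB; rewrite (frobnorm2_pinvB_split hA hB).
rewrite -addrA [leLHS]addrC lerD2r [leLHS]addrC.
exact: lerD (frobnorm2_pinv_coprojC_le hA hB) (frobnorm2_pinv_projC_le hA hB).
Qed.

Lemma frobnorm2_pinvB_le_swap m n (A B : 'M[C]_(m, n)) (Ad Bd : 'M[C]_(n, m)) :
  is_MP_inverse A Ad -> is_MP_inverse B Bd ->
  frobnorm (Bd - Ad) ^+ 2 <=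
    specnorm Ad ^+ 2 * (frobnorm ((B - A) *m Ad) ^+ 2
                        - frobnorm (Bd *m (B - A) *m Ad) ^+ 2 / specnorm Bd ^+ 2)
  + specnorm Bd ^+ 2 * (frobnorm (Bd *m (B - A)) ^+ 2
                        - frobnorm (Bd *m (B - A) *m Ad) ^+ 2 / specnorm Ad ^+ 2)
  + frobnorm (Ad *m (B - A) *m Bd) ^+ 2.
Proof.
move=> hA hB; rewrite -opprB frobnormN; apply: le_trans (frobnorm2_pinvB_le hB hA) _.
rewrite -[A - B]opprB !mulmxN !mulNmx !frobnormN lerD2r.
by rewrite [leLHS]addrC.
Qed.

End PinvPerturbation.

Theorem corollary3p4 (R : realType) (m n r s : nat) (A B : 'M[R[i]]_(m, n))
  (hA : \rank A = r) (hB : \rank B = s) :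
  let E := B - A in
  let Ad := pinv A in
  let Bd := pinv B in
  let gamma1 :=
    specnorm Ad ^+ 2 * (frobnorm (Ad *m E) ^+ 2
                        - frobnorm (Ad *m E *m Bd) ^+ 2 / specnorm Bd ^+ 2)
    + specnorm Bd ^+ 2 * (frobnorm (E *m Bd) ^+ 2
                        - frobnorm (Ad *m E *m Bd) ^+ 2 / specnorm Ad ^+ 2) in
  let gamma2 :=
    specnorm Ad ^+ 2 * (frobnorm (E *m Ad) ^+ 2
                        - frobnorm (Bd *m E *m Ad) ^+ 2 / specnorm Bd ^+ 2)
    + specnorm Bd ^+ 2 * (frobnorm (Bd *m E) ^+ 2
                        - frobnorm (Bd *m E *m Ad) ^+ 2 / specnorm Ad ^+ 2) in
  frobnorm (Bd - Ad) ^+ 2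
    <= Num.min (gamma1 + frobnorm (Bd *m E *m Ad) ^+ 2)
               (gamma2 + frobnorm (Ad *m E *m Bd) ^+ 2).
Proof.
cbv zeta; rewrite le_min; apply/andP; split.
  exact: frobnorm2_pinvB_le (pinvP A) (pinvP B).
exact: frobnorm2_pinvB_le_swap (pinvP A) (pinvP B).
Qed.
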